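(* Every pairwise linked lobster is graceful.
   Context: A graph $G=(V,E)$ with $m$ edges is graceful if there is an injective $f:V\to\{0,\ldots,m\}$ (a graceful labeling) with the edge labels $|f(u)-f(v)|$, $uv\in E$, pairwise distinct. A lobster is a tree whose base (the tree obtained by deleting all degree-one vertices) is a caterpillar, a caterpillar being a tree whose base is a path. A lobster $L$ is described by a spine, a path $(v_1,\ldots,v_r)$, together with, for each $i$, a tree $F_i$ (the lobe at $v_i$), the lobes pairwise vertex-disjoint and each meeting the spine only in $v_i$, with $L$ the union of the spine and the lobes; each lobe $F_i$ consists of $v_i$, vertices $u_{i1},\ldots,u_{is_i}$ ($s_i\ge 0$) adjacent to $v_i$, and for each $j$ some $k_{ij}\ge0$ further vertices adjacent only to $u_{ij}$. If $k_{ij}=0$, $u_{ij}$ is a pendant vertex at $v_i$; the reduced lobe $F'_i$ is $F_i$ with all pendant vertices at $v_i$ deleted. For two vertex-disjoint graceful graphs $G_1,G_2$ with given graceful labelings, $G_1\circ G_2$ denotes the graph obtained by identifying the maximum-labeled vertex of $G_1$ with the maximum-labeled vertex of $G_2$. $L$ is pairwise linked if there are trees $G_1,\ldots,G_r$ of diameter $4$, each with a graceful labeling in which its central vertex has the maximum label, such that $F'_i\cong G_i\circ G_{i+1}$ for each $i=1,\ldots,r-1$ and $F'_r\cong G_r$. *)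

From mathcomp Require Import all_boot.
Unset Printing Implicit Defensive.

Record graph := Graph { vtx : finType; adj : rel vtx }.
Arguments adj {g}.

Definition simple (G : graph) : Prop :=
  irreflexive (@adj G) /\ symmetric (@adj G).

(** Number of edges (each unordered edge counted by its two orientations). *)
Definition nedges (G : graph) : nat :=
  #|[set p : vtx G * vtx G | adj p.1 p.2]| %/ 2.

Definition absdiff (a b : nat) : nat := (a - b) + (b - a).

Definition graceful_labeling (G : graph) (f : vtx G -> nat) : Prop :=
  injective f /\ (forall v, f v <= nedges G) /\
  (forall x y x' y', adj x y -> adj x' y' ->
     absdiff (f x) (f y) = absdiff (f x') (f y') ->
     (x = x' /\ y = y') \/ (x = y' /\ y = x')).

Definition graceful (G : graph) : Prop := exists f, graceful_labeling G f.

Definition connected (G : graph) : Prop :=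
  forall x y : vtx G, connect (@adj G) x y.

Definition tree (G : graph) : Prop :=
  simple G /\ 0 < #|vtx G| /\ connected G /\ nedges G = #|vtx G| - 1.

Definition walk_le (G : graph) (n : nat) (x y : vtx G) : Prop :=
  exists p : seq (vtx G), size p <= n /\ path (@adj G) x p /\ last x p = y.

Definition diameter4 (G : graph) : Prop :=
  (forall x y, walk_le G 4 x y) /\ exists x y, ~ walk_le G 3 x y.

Definition central (G : graph) (c : vtx G) : Prop := forall v, walk_le G 2 c v.

Definition induced (G : graph) (S : {set vtx G}) : graph :=
  @Graph {x : vtx G | x \in S}
         (fun x y => @adj G (val x) (val y)).

Definition isomorphic (G1 G2 : graph) : Prop :=
  exists h : vtx G1 -> vtx G2, bijective h /\
    forall x y, @adj G1 x y = @adj G2 (h x) (h y).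

(** Gluing G1 and G2 by identifying c1 in G1 with c2 in G2. *)
Section Glue.
Variables (G1 G2 : graph) (c1 : vtx G1) (c2 : vtx G2).
Definition glue_phi (x : vtx G1 + vtx G2) : vtx G1 + vtx G2 :=
  match x with inr b => if b == c2 then inl c1 else x | _ => x end.
Definition sum_adj (a b : vtx G1 + vtx G2) : bool :=
  match a, b with
  | inl a, inl b => @adj G1 a b
  | inr a, inr b => @adj G2 a b
  | _, _ => false end.
Definition glue_vtx : finType :=
  {x : vtx G1 + vtx G2 | glue_phi x == x}.
Definition glue : graph :=
  @Graph glue_vtx (fun x y : glue_vtx =>
    [exists a, exists b,
       [&& glue_phi a == val x, glue_phi b == val y & sum_adj a b]]).
End Glue.

(** G1 ∘ G2 w.r.t. graceful labelings f1, f2: identify the maximum-labeled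
    vertices; here m1, m2 are required to be those vertices. *)
Definition is_max_label (G : graph) (f : vtx G -> nat) (m : vtx G) : Prop :=
  forall v, f v <= f m.

(** Lobster via base (deletion of degree-one vertices), on vertex subsets. *)
Section Lobster.
Variable G : graph.
Definition deg_in (S : {set vtx G}) (x : vtx G) : nat :=
  #|[set y in S | adj x y]|.
Definition base (S : {set vtx G}) : {set vtx G} :=
  [set x in S | deg_in S x != 1].
(** path graph (the empty graph is allowed as a degenerate path) *)
Definition path_on (S : {set vtx G}) : Prop :=
  S = set0 \/ (tree (induced G S) /\ forall x, x \in S -> deg_in S x <= 2).
Definition caterpillar_on (S : {set vtx G}) : Prop :=
  S = set0 \/ (tree (induced G S) /\ path_on (base S)).
End Lobster.

Definition lobster (L : graph) : Prop :=
  tree L /\ caterpillar_on L (base L [set: vtx L]).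

(** Pairwise linked lobster.  Spine v_0..v_{r-1} is [s 0 .. s (r-1)];
    [lobe x] is the index i of the lobe F_i containing x. *)
Definition pairwise_linked (L : graph) : Prop :=
  exists (r : nat) (s : nat -> vtx L) (lobe : vtx L -> nat)
         (G : nat -> graph) (f : forall i, vtx (G i) -> nat)
         (c : forall i, vtx (G i)),
  0 < r /\
      (forall i j, i < r -> j < r -> s i = s j -> i = j) /\
      (forall i, i.+1 < r -> adj (s i) (s i.+1)) /\
      (* lobes partition V, F_i meets the spine only in v_i *)
      (forall x, lobe x < r) /\ (forall i, i < r -> lobe (s i) = i) /\
      (* L is the union of the spine and the lobes *)
      (forall x y, adj x y -> lobe x = lobe y \/
         exists i, i.+1 < r /\ ((x = s i /\ y = s i.+1) \/ (x = s i.+1 /\ y = s i))) /\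
      (* shape of a lobe: v_i, the u_ij adjacent to v_i, and further
         vertices adjacent (within F_i) only to their u_ij *)
      (forall x, let i := lobe x in
         x = s i \/ adj (s i) x \/
         exists u, [/\ lobe u = i, adj (s i) u, adj u x &
                      forall y, lobe y = i -> adj x y -> y = u]) /\
      (forall i, i < r ->
         [/\ tree (G i), diameter4 (G i), graceful_labeling (G i) (f i),
             central (G i) (c i) & is_max_label (G i) (f i) (c i)]) /\
      let Fred i := [set x | (lobe x == i) &&
                      ~~ (adj (s i) x &&
                          [forall y, ((lobe y == i) && adj x y) ==> (y == s i)])] in
      (forall i, i.+1 < r ->
         isomorphic (induced L (Fred i)) (glue (G i) (G i.+1) (c i) (c i.+1))) /\
      isomorphic (induced L (Fred r.-1)) (G r.-1).

From mathcomp Require Import all_boot zify.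
From Stdlib Require Import IndefiniteDescription.

Set Implicit Arguments.
Unset Strict Implicit.
Unset Printing Implicit Defensive.

(* Label the lobster level by level along the spine.  Level j consists of the
   pendant vertices at v_j, the copy of G_j centred at v_j and, for j > 0, the copy
   of G_j centred at v_(j-1) minus its centre.  Every edge of a diameter-4 tree joins
   a neighbour of the centre to a non-neighbour.  Passing to level j, the old labels
   are reflected by n |-> k_j + m_j + N_(j-1) - n, which keeps their differences; the
   pendants get 0, ..., k_j - 1; a vertex of either copy of G_j gets k_j + f or
   N_j - m_j + f, the low value going to the neighbours of the centre in the first
   copy and to the other vertices in the second.  An edge of G_j with difference d
   then yields the two new labels N_(j-1) + m_j + 1 +- d, the spine edge
   v_(j-1) v_j gets N_(j-1) + m_j + 1 and the pendant edges the top k_j labels, so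
   the labeling stays graceful onto {0, ..., N_j}. *)

Section Walks.
Variable G : graph.
Implicit Types (x y z : vtx G).

Lemma walk_le_cat n1 n2 x y z :
  walk_le G n1 x y -> walk_le G n2 y z -> walk_le G (n1 + n2) x z.
Proof.
move=> [p [sp [pp lp]]] [q [sq [pq lq]]]; exists (p ++ q).
by rewrite size_cat leq_add // cat_path last_cat lp pp pq.
Qed.

Lemma walk_le_mono n n' x y : n <= n' -> walk_le G n x y -> walk_le G n' x y.
Proof. by move=> le_nn' [p [sp Hp]]; exists p; split=> //; apply: leq_trans le_nn'. Qed.

Lemma walk_le1 x y : adj x y -> walk_le G 1 x y.
Proof. by move=> xy; exists [:: y]; rewrite /= xy. Qed.

Lemma walk_le2P x y :
  walk_le G 2 x y <-> [\/ x = y, adj x y | exists2 t, adj x t & adj t y].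
Proof.
split.
- case=> [[|a [|b [|d p]]]] [//= _ [Hp <-]]; first by constructor 1.
    by constructor 2; case/andP: Hp.
  by constructor 3; exists a; case/and3P: Hp.
case=> [->|xy|[t xt ty]]; first by exists [::].
  by apply: (@walk_le_mono 1) => //; apply: walk_le1.
by apply: (@walk_le_cat 1 1 _ t); apply: walk_le1.
Qed.

End Walks.

Section CenteredTree.
Variables (G : graph) (c : vtx G).
Hypotheses (treeG : tree G) (centralc : central G c).
Local Notation V := (vtx G).
Implicit Types (a b w x y z : V).

Let irrG : irreflexive (@adj G). Proof. by case: treeG => [[]]. Qed.
Let symG : symmetric (@adj G). Proof. by case: treeG => [[]]. Qed.

Definition parent a : V := if adj c a then c else odflt c [pick t | adj c t && adj t a].

Lemma parent_center a : adj c a -> parent a = c.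
Proof. by rewrite /parent => ->. Qed.

Lemma parent_spec a : a != c ->
  adj a (parent a) /\ (~~ adj c a -> adj c (parent a)).
Proof.
move=> ac; rewrite /parent; case: ifP => [ca|/negbT nca]; first by rewrite symG ca.
case: pickP => [t /andP [ct ta]|none]; first by rewrite symG ta ct.
case: ((walk_le2P _ _).1 (centralc a)) => [ae|ca|[t ct ta]].
- by rewrite ae eqxx in ac.
- by rewrite ca in nca.
by have := none t; rewrite ct ta.
Qed.

Lemma parent_adj a : a != c -> adj a (parent a).
Proof. by case/parent_spec. Qed.

Lemma adj_center_parent a : a != c -> ~~ adj c a -> adj c (parent a).
Proof. by case/parent_spec. Qed.

Lemma parent_neq_center a : a != c -> parent a != c -> adj c (parent a) /\ ~~ adj c a.
Proof.
move=> ac pac; case ca: (adj c a); first by rewrite parent_center ?eqxx in pac.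
by rewrite adj_center_parent ?ca.
Qed.

Definition parent_pairs : {set V * V} :=
  [set (a, parent a) | a in [set~ c]] :|: [set (parent a, a) | a in [set~ c]].

Lemma card_parent_pairs : #|parent_pairs| = (#|V| - 1).*2.
Proof.
have card_image (g : V -> V * V) : injective g -> #|g @: [set~ c]| = #|V| - 1.
  by move=> g_inj; rewrite card_imset // cardsC1 subn1.
rewrite cardsU !card_image; last 2 first.
- by move=> a b [].
- by move=> a b [].
suff -> : [set (a, parent a) | a in [set~ c]] :&: [set (parent a, a) | a in [set~ c]] = set0.
  by rewrite cards0 subn0 addnn.
apply/setP=> p; rewrite inE in_set0; apply/negbTE/negP => /andP [/imsetP [a ac ->]].
case/imsetP=> b bc [eab epa]; move: ac bc; rewrite !inE => ac bc.
have pac : parent a != c by rewrite epa.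
have [cb _] := parent_neq_center ac pac; rewrite epa in cb.
by move: ac; rewrite eab parent_center // eqxx.
Qed.

(* The |V| - 1 parent pairs, in both orientations, already exhaust the
   2 (|V| - 1) adjacent pairs. *)
Lemma edge_parent x y : adj x y -> (x, y) \in parent_pairs.
Proof.
move=> xy; apply: contraTT isT => nxy.
have sub : parent_pairs \subset [set p : V * V | adj p.1 p.2].
  apply/subsetP=> p; rewrite /parent_pairs !inE => /orP [] /imsetP [a]; rewrite !inE => ac ->.
    by rewrite /= parent_adj.
  by rewrite /= symG parent_adj.
have nyx : (y, x) \notin parent_pairs.
  apply: contra nxy; rewrite /parent_pairs !inE => /orP [] /imsetP [a ac [-> ->]].
    by apply/orP; right; apply/imsetP; exists a.
  by apply/orP; left; apply/imsetP; exists a.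
have yx_neq : (x, y) != (y, x) by apply: contraTneq xy => -[->]; rewrite irrG.
have : parent_pairs :|: [set (x, y); (y, x)] \subset [set p : V * V | adj p.1 p.2].
  by rewrite subUset sub subUset !sub1set !inE /= xy symG xy.
move/subset_leq_card; rewrite cardsU card_parent_pairs cards2 yx_neq /=.
have -> : parent_pairs :&: [set (x, y); (y, x)] = set0.
  apply/setP=> p; rewrite in_setI in_set0 in_set2; apply/negbTE/andP => -[pP /orP [] /eqP pE];
  by move: pP; rewrite pE ?(negbTE nxy) ?(negbTE nyx).
have [_ [V0 [_]]] := treeG; rewrite /nedges cards0.
by move: (#|_|) (#|V|) V0 => e n; lia.
Qed.

Lemma adj_parent x y : adj x y -> (x != c /\ y = parent x) \/ (y != c /\ x = parent y).
Proof.
move/edge_parent; rewrite /parent_pairs !inE => /orP [] /imsetP [a]; rewrite !inE => ac [-> ->].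
  by left.
by right.
Qed.

Lemma not_adj_center_triangle a b : adj a b -> adj c a -> ~~ adj c b.
Proof.
move=> ab ca; apply/negP=> cb.
have nc t : adj c t -> t != c by apply: contraTneq => ->; rewrite irrG.
case: (adj_parent ab) => -[_ E].
- by move: (nc b cb); rewrite E parent_center // eqxx.
- by move: (nc a ca); rewrite E parent_center // eqxx.
Qed.

Lemma adj_center_xor a b : adj a b -> adj c a != adj c b.
Proof.
move=> ab; case ca: (adj c a); first by rewrite eq_sym (negbTE (not_adj_center_triangle ab ca)).
case cb: (adj c b) => //.
have [[ac E]|[bc E]] := adj_parent ab.
  by rewrite E adj_center_parent ?ca in cb.
by rewrite E adj_center_parent ?cb in ca.
Qed.

Lemma adj_level2 w t : w != c -> ~~ adj c w -> adj w t -> t = parent w.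
Proof.
move=> wc nw wt; have [[_ //]|[tc wE]] := adj_parent wt.
have ptc : parent t != c by rewrite -wE.
have [cw _] := parent_neq_center tc ptc.
by move: nw; rewrite wE cw.
Qed.

Lemma diameter4_far_pair : diameter4 G -> exists x y,
  [/\ x != c, ~~ adj c x, y != c, ~~ adj c y & parent x != parent y].
Proof.
case=> _ [x [y far]].
have cx : walk_le G 2 x c.
  by apply/walk_le2P; case/walk_le2P: (centralc x) => [->|cx|[t ct tx]];
     [constructor 1 | constructor 2; rewrite symG | constructor 3; exists t; rewrite symG].
have far_x : x != c /\ ~~ adj c x.
  split; first by apply: contra_not_neq far => ->; exact: walk_le_mono (leqnSn 2) (centralc y).
  apply: contra_notN far => cx'.
  by apply: (@walk_le_cat _ 1 2 _ c) => //; apply: walk_le1; rewrite symG.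
have far_y : y != c /\ ~~ adj c y.
  split; first by apply: contra_not_neq far => ->; exact: walk_le_mono (leqnSn 2) cx.
  apply: contra_notN far => cy.
  by apply: (@walk_le_cat _ 2 1 _ c) => //; apply: walk_le1.
case: far_x far_y => xc nx [yc ny]; exists x, y; split=> //.
apply: contra_not_neq far => pxy.
apply: (walk_le_mono (leqnSn 2)); apply/walk_le2P; constructor 3; exists (parent x).
  exact: parent_adj.
by rewrite pxy symG parent_adj.
Qed.

Lemma exists_level2 : diameter4 G -> exists2 w, w != c & ~~ adj c w.
Proof. by case/diameter4_far_pair=> x [y [xc nx _ _ _]]; exists x. Qed.

Lemma central_unique z : diameter4 G -> central G z -> z = c.
Proof.
move=> diamG centralz; have [x [y [xc nx yc ny pxy]]] := diameter4_far_pair diamG.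
apply: contra_neq_eq pxy => zc.
pose hub := if adj c z then z else parent z.
suff near w : w != c -> ~~ adj c w -> parent w = hub by rewrite (near x) ?(near y).
move=> wc nw; rewrite /hub; case/walk_le2P: (centralz w) => [zw|zw|[t zt tw]].
- by move: nw; rewrite -zw => /negbTE ->.
- case: ifP => cz; first by apply/esym/adj_level2; rewrite // symG.
  by move: nw; rewrite (adj_level2 zc (negbT cz) zw) adj_center_parent ?cz.
- have tE : t = parent w by apply: adj_level2; rewrite // symG.
  case: ifP => cz.
    by move: (not_adj_center_triangle zt cz); rewrite tE adj_center_parent.
  by rewrite -tE (adj_level2 zc (negbT cz) zt).
Qed.

End CenteredTree.

Lemma graceful_tree_onto (G : graph) (f : vtx G -> nat) (c : vtx G) :
  tree G -> graceful_labeling G f -> is_max_label G f c ->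
  f c = nedges G /\ forall n, n <= nedges G -> exists a, f a = n.
Proof.
move=> [_ [V0 [_ EG]]] [f_inj [f_le _]] fc_max.
have onto n : n <= nedges G -> exists a, f a = n.
  have sub : {subset map f (enum (vtx G)) <= iota 0 (nedges G).+1}.
    by move=> _ /mapP [x _ ->]; rewrite mem_iota ltnS f_le.
  have uniq_f : uniq (map f (enum (vtx G))) by rewrite map_inj_uniq ?enum_uniq.
  have [|_ same] := uniq_min_size uniq_f sub.
    by rewrite size_map -cardE size_iota EG subn1 prednK.
  move=> le_n; have : n \in iota 0 (nedges G).+1 by rewrite mem_iota ltnS.
  by rewrite -same => /mapP [a _ ->]; exists a.
split=> //; have [a fa] := onto _ (leqnn _).
by apply/eqP; rewrite eqn_leq f_le -fa fc_max.
Qed.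

Lemma card_onto_iota (T : finType) (g : T -> nat) n : injective g ->
  (forall x, g x <= n) -> (forall i, i <= n -> exists x, g x = i) -> #|T| = n.+1.
Proof.
move=> g_inj g_le g_onto; rewrite cardE -(size_map g) -(size_iota 0 n.+1).
apply/perm_size/uniq_perm; rewrite ?iota_uniq ?map_inj_uniq -?enumT ?enum_uniq // => i.
rewrite mem_iota ltnS; apply/mapP/idP => [[x _ ->]|/g_onto [x <-]]; first exact: g_le.
by exists x; rewrite ?mem_enum.
Qed.

Section Glue.
Variables (G1 G2 : graph) (c1 : vtx G1) (c2 : vtx G2).
Hypotheses (irr1 : irreflexive (@adj G1)) (irr2 : irreflexive (@adj G2)).
Local Notation phi := (glue_phi G1 G2 c1 c2).
Local Notation GV := (vtx (glue G1 G2 c1 c2)).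
Implicit Types (x y : vtx G1 + vtx G2) (u v : GV).

Lemma glue_phi_idem x : phi (phi x) = phi x.
Proof. by case: x => [//|b] /=; case: (eqVneq b c2) => [//|nb] /=; rewrite (negbTE nb). Qed.

Definition glue_in x : GV := exist _ (phi x) (introT eqP (glue_phi_idem x)).

Lemma glue_in_val u : glue_in (val u) = u.
Proof. by apply: val_inj; case: u => x /= /eqP. Qed.

Lemma glue_in_phi x : glue_in (phi x) = glue_in x.
Proof. by apply: val_inj; rewrite /= glue_phi_idem. Qed.

Lemma glue_in_eq x y : glue_in x = glue_in y -> phi x = phi y.
Proof. by move/(congr1 val). Qed.

Lemma glue_in_center : glue_in (inr c2) = glue_in (inl c1).
Proof. by apply: val_inj => /=; rewrite eqxx. Qed.

Lemma glue_val_inr u b : val u = inr b -> b != c2.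
Proof. by move=> uE; apply: contraTneq (valP u) => bc2; rewrite uE bc2 /= eqxx. Qed.

Lemma glue_phi_inr b : b != c2 -> phi (inr b) = inr b.
Proof. by move=> /negbTE /= ->. Qed.

Lemma glue_phi_eq x y : phi x = phi y ->
  x = y \/ (phi y = inl c1 /\ (x = inl c1 \/ x = inr c2)).
Proof.
case: x => [a|a]; case: y => [b|b] /=; try case: eqP => [ea|na]; try case: eqP => [eb|nb];
  move=> E; try by [left; congruence | right; subst; split; auto].
all: by case: E => ->; left.
Qed.

Lemma adj_glue_in_inl a b : adj (glue_in (inl a)) (glue_in (inl b)) = adj a b.
Proof.
apply/existsP/idP => [[a' /existsP [b' /and3P [/eqP Ea /eqP Eb ab]]]|ab].
  case: (glue_phi_eq Ea) => [Ea'|[Ea1 [Ea'|Ea']]];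
  case: (glue_phi_eq Eb) => [Eb'|[Eb1 [Eb'|Eb']]]; subst => //=.
  all: try (move: Ea1 => /= [E1]); try (move: Eb1 => /= [E2]); subst.
  all: try (by []); try (by move: ab => /=; rewrite ?irr1 ?irr2).
by exists (inl a); apply/existsP; exists (inl b); rewrite !eqxx.
Qed.

Lemma adj_glue_in_inr a b : adj (glue_in (inr a)) (glue_in (inr b)) = adj a b.
Proof.
have phi_c a' : phi (inr a') = inl c1 -> a' = c2 by rewrite /=; case: eqP.
apply/existsP/idP => [[a' /existsP [b' /and3P [/eqP Ea /eqP Eb ab]]]|ab].
  case: (glue_phi_eq Ea) => [Ea'|[Ea1 [Ea'|Ea']]];
  case: (glue_phi_eq Eb) => [Eb'|[Eb1 [Eb'|Eb']]]; subst => //=.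
  all: try (move/phi_c: Ea1 => Ea1); try (move/phi_c: Eb1 => Eb1); subst.
  all: try (by []); try (by move: ab => /=; rewrite ?irr1 ?irr2).
by exists (inr a); apply/existsP; exists (inr b); rewrite !eqxx.
Qed.

Lemma glue_adj u v : adj u v ->
  (exists a b, [/\ u = glue_in (inl a), v = glue_in (inl b) & adj a b]) \/
  (exists a b, [/\ u = glue_in (inr a), v = glue_in (inr b) & adj a b]).
Proof.
move=> /existsP [x /existsP [y /and3P [/eqP Ex /eqP Ey xy]]].
rewrite -(glue_in_val u) -(glue_in_val v) -Ex -Ey !glue_in_phi.
by move: xy {Ex Ey}; case: x y => [a|a] [b|b] //= ab; [left | right]; exists a, b.
Qed.

Lemma glue_in_inlr a b : glue_in (inl a) = glue_in (inr b) -> a = c1 /\ b = c2.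
Proof. by move/glue_in_eq => /=; case: eqP => // -> [->]. Qed.

Lemma glue_in_inrK a b : b != c2 -> glue_in (inr a) = glue_in (inr b) -> a = b.
Proof. by move=> bc /glue_in_eq; rewrite (glue_phi_inr bc) /=; case: eqP => // _ []. Qed.

Lemma glue_in_inlK a b : glue_in (inl a) = glue_in (inl b) -> a = b.
Proof. by move/glue_in_eq => -[]. Qed.

Lemma glue_far_inl a w : a != c1 -> w != c2 -> ~~ adj c2 w ->
  ~ walk_le (glue G1 G2 c1 c2) 2 (glue_in (inl a)) (glue_in (inr w)).
Proof.
move=> ac wc nw; have noc1 a' b' : glue_in (inl a') = glue_in (inr b') -> a' != c1 -> False.
  by case/glue_in_inlr=> ->; rewrite eqxx.
have noc2 a' b' : glue_in (inl a') = glue_in (inr b') -> b' != c2 -> False.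
  by case/glue_in_inlr=> _ ->; rewrite eqxx.
case/walk_le2P=> [E|E|[t zt tw]]; first exact: noc1 E ac.
  by case: (glue_adj E) => -[a' [b' [Ea Eb _]]]; [apply: noc2 (esym Eb) wc | apply: noc1 Ea ac].
case: (glue_adj tw) => -[t1 [w' [Et Ew t1w']]]; first exact: noc2 (esym Ew) wc.
case: (glue_adj zt) => -[a' [t' [Ez Et' _]]]; last exact: noc1 Ez ac.
have [_ t1c] := glue_in_inlr (etrans (esym Et') Et).
by move: nw; rewrite -(glue_in_inrK wc (esym Ew)) -t1c t1w'.
Qed.

Lemma glue_far_inr b w : b != c2 -> w != c1 -> ~~ adj c1 w ->
  ~ walk_le (glue G1 G2 c1 c2) 2 (glue_in (inr b)) (glue_in (inl w)).
Proof.
move=> bc wc nw; have noc1 a' b' : glue_in (inl a') = glue_in (inr b') -> a' != c1 -> False.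
  by case/glue_in_inlr=> ->; rewrite eqxx.
have noc2 a' b' : glue_in (inl a') = glue_in (inr b') -> b' != c2 -> False.
  by case/glue_in_inlr=> _ ->; rewrite eqxx.
case/walk_le2P=> [E|E|[t zt tw]]; first exact: noc1 (esym E) wc.
  by case: (glue_adj E) => -[a' [b' [Ea Eb _]]]; [apply: noc2 (esym Ea) bc | apply: noc1 Eb wc].
case: (glue_adj tw) => -[t1 [w' [Et Ew t1w']]]; last exact: noc1 Ew wc.
case: (glue_adj zt) => -[a' [t' [Ez Et' _]]]; first exact: noc2 (esym Ez) bc.
have [t1c _] := glue_in_inlr (etrans (esym Et) Et').
by move: nw; rewrite -t1c (glue_in_inlK Ew) t1w'.
Qed.

Lemma glue_central z :
  (exists2 w1, w1 != c1 & ~~ adj c1 w1) -> (exists2 w2, w2 != c2 & ~~ adj c2 w2) ->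
  central (glue G1 G2 c1 c2) z -> z = glue_in (inl c1).
Proof.
move=> [w1 w1c nw1] [w2 w2c nw2] zc; rewrite -(glue_in_val z).
case E: (val z) => [a|b].
  case: (eqVneq a c1) => [-> //|ac]; exfalso.
  by apply: (glue_far_inl ac w2c nw2); rewrite -E glue_in_val.
by exfalso; apply: (glue_far_inr (glue_val_inr E) w1c nw1); rewrite -E glue_in_val.
Qed.

End Glue.

Arguments glue_in {G1 G2 c1 c2} x.
Arguments glue_in_center {G1 G2 c1 c2}.
Arguments adj_glue_in_inl {G1 G2 c1 c2}.
Arguments adj_glue_in_inr {G1 G2 c1 c2}.

Unset Implicit Arguments.

Definition induced_iso {L H : graph} (S : {set vtx L})
    (h : vtx L -> vtx H) (g : vtx H -> vtx L) :=
  [/\ forall w, g w \in S, cancel g h, {in S, cancel h g} &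
      {in S &, forall x y, adj (h x) (h y) = adj x y}].

Lemma isomorphic_induced_iso {L H : graph} {S : {set vtx L}} (d : vtx H) :
  isomorphic (induced L S) H ->
  exists (h : vtx L -> vtx H) (g : vtx H -> vtx L), induced_iso S h g.
Proof.
move=> [h [[g hK gK] hadj]].
exists (fun x => if insub x is Some y then h y else d), (fun w => val (g w)); split.
- by move=> w; apply: valP.
- by move=> w; rewrite valK gK.
- by move=> x xS; rewrite insubT /= hK.
- by move=> x y xS yS; rewrite !insubT -hadj.
Qed.

Lemma induced_iso_family (L : graph) (P : pred nat) (S : nat -> {set vtx L})
    (H : nat -> graph) (x0 : vtx L) (d : forall i, vtx (H i)) :
  (forall i, P i -> isomorphic (induced L (S i)) (H i)) ->
  exists (h : forall i, vtx L -> vtx (H i)) (g : forall i, vtx (H i) -> vtx L),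
    forall i, P i -> induced_iso (S i) (h i) (g i).
Proof.
move=> isoS.
have pick i : {hg : (vtx L -> vtx (H i)) * (vtx (H i) -> vtx L) |
                 P i -> induced_iso (S i) hg.1 hg.2}.
  apply: constructive_indefinite_description.
  case: (boolP (P i)) => [/isoS /(isomorphic_induced_iso (d i)) [h [g iso]]|nPi].
    by exists (h, g).
  by exists (fun=> d i, fun=> x0) => /negP.
by exists (fun i => (sval (pick i)).1), (fun i => (sval (pick i)).2) => i; exact: svalP (pick i).
Qed.

Definition same_edge {T : Type} (x y x' y' : T) := (x = x' /\ y = y') \/ (x = y' /\ y = x').

Lemma same_edge_trans {T : Type} {x y x' y' u v : T} :
  same_edge x y u v -> same_edge x' y' u v -> same_edge x y x' y'.
Proof. by case=> -[-> ->] [] [-> ->]; [left | right | right | left]. Qed.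

Lemma same_edge_swap {T : Type} {x y u v : T} : same_edge x y u v -> same_edge x y v u.
Proof. by case=> -[-> ->]; [right | left]. Qed.

Section LobsterDecomposition.
Variables (L : graph) (r : nat) (s : nat -> vtx L) (lobe : vtx L -> nat).
Variables (G : nat -> graph) (f : forall i, vtx (G i) -> nat) (c : forall i, vtx (G i)).
Hypotheses (treeL : tree L) (r_gt0 : 0 < r).
Hypotheses (lobe_lt : forall x, lobe x < r) (lobe_spine : forall i, i < r -> lobe (s i) = i).
Hypothesis edge_lobe : forall x y, adj x y -> lobe x = lobe y \/
  exists i, i.+1 < r /\ ((x = s i /\ y = s i.+1) \/ (x = s i.+1 /\ y = s i)).
Hypothesis lobe_shape : forall x, let i := lobe x in
  x = s i \/ adj (s i) x \/
  exists u, [/\ lobe u = i, adj (s i) u, adj u x & forall y, lobe y = i -> adj x y -> y = u].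
Hypothesis lobe_graph : forall i, i < r ->
  [/\ tree (G i), diameter4 (G i), graceful_labeling (G i) (f i), central (G i) (c i)
    & is_max_label (G i) (f i) (c i)].

Definition pendants i : {set vtx L} := [set x | (lobe x == i) &&
  (adj (s i) x && [forall y, ((lobe y == i) && adj x y) ==> (y == s i)])].
Definition reduced_lobe i : {set vtx L} := [set x | (lobe x == i) &&
  ~~ (adj (s i) x && [forall y, ((lobe y == i) && adj x y) ==> (y == s i)])].

Local Notation glued i := (glue (G i) (G i.+1) (c i) (c i.+1)).
Variables (hh : forall i, vtx L -> vtx (glued i)) (gg : forall i, vtx (glued i) -> vtx L).
Hypothesis iso_lobe : forall i, i.+1 < r -> induced_iso (reduced_lobe i) (hh i) (gg i).
Variables (hl : forall i, vtx L -> vtx (G i)) (gl : forall i, vtx (G i) -> vtx L).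
Hypothesis iso_last : induced_iso (reduced_lobe r.-1) (hl r.-1) (gl r.-1).

Let symL : symmetric (@adj L). Proof. by case: treeL => [[]]. Qed.
Let irrL : irreflexive (@adj L). Proof. by case: treeL => [[]]. Qed.
Let irrG {i} : i < r -> irreflexive (@adj (G i)). Proof. by case/lobe_graph => [[[]]]. Qed.
Let symG {i} : i < r -> symmetric (@adj (G i)). Proof. by case/lobe_graph => [[[]]]. Qed.

Lemma last_lobe {i} : i < r -> ~~ (i.+1 < r) -> i = r.-1.
Proof. by lia. Qed.

Lemma reduced_lobeP {i x} : x \in reduced_lobe i -> lobe x = i.
Proof. by rewrite inE => /andP [/eqP]. Qed.

Lemma pendants_lobe {i x} : x \in pendants i -> lobe x = i.
Proof. by rewrite inE => /andP [/eqP]. Qed.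

Lemma pendantsE x : (x \in pendants (lobe x)) = (x \notin reduced_lobe (lobe x)).
Proof. by rewrite !inE eqxx negbK. Qed.

Lemma pendant_adj {i p y} : p \in pendants i -> lobe y = i -> adj p y -> y = s i.
Proof. by rewrite inE => /and3P [_ _ /forallP /(_ y)] + ly py; rewrite ly eqxx py => /eqP. Qed.

Lemma spine_reduced {i} : i < r -> s i \in reduced_lobe i.
Proof. by move=> ir; rewrite inE lobe_spine // eqxx irrL. Qed.

Lemma reduced_lobe_shape {i x} : x \in reduced_lobe i ->
  [\/ x = s i, adj (s i) x | exists2 u, u \in reduced_lobe i & adj (s i) u /\ adj u x].
Proof.
move=> xF; have lx := reduced_lobeP xF.
case: (lobe_shape x) => /=; rewrite lx; first by constructor 1.
case=> [sx|[u [lu su ux uniq_u]]]; first by constructor 2.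
have [->|xs] := eqVneq x (s i); first by constructor 1.
constructor 3; exists u => //; apply: contraTT xs; rewrite -lu -pendantsE lu => up.
by rewrite (pendant_adj up lx ux) eqxx.
Qed.

Lemma central_spine {i} {H : graph} {h : vtx L -> vtx H} {g} :
  i < r -> induced_iso (reduced_lobe i) h g -> central H (h (s i)).
Proof.
move=> ir [gS gK hK hadj] w; apply/walk_le2P; rewrite -(gK w).
have sF := spine_reduced ir; case: (reduced_lobe_shape (gS w)) => [->|sx|[u uF [su ux]]].
- by constructor 1.
- by constructor 2; rewrite hadj.
- by constructor 3; exists (h u); rewrite hadj.
Qed.

(* [embA j] embeds G_j centred at the spine vertex s j (the first factor of the
   glued lobe j, or the whole last lobe); [embB j] embeds G_(j+1) glued at s j. *)
Definition embA j (a : vtx (G j)) : vtx L :=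
  if j.+1 < r then gg j (glue_in (inl a)) else gl j a.
Definition embB j (b : vtx (G j.+1)) : vtx L := gg j (glue_in (inr b)).

Lemma embA_center {i} : i < r -> embA i (c i) = s i.
Proof.
move=> ir; have [treeGi diamGi _ centralGi _] := lobe_graph _ ir.
rewrite /embA; case: ifP => ir1.
  have [treeGi1 diamGi1 _ centralGi1 _] := lobe_graph _ ir1.
  have [_ _ hK _] := iso_lobe _ ir1.
  rewrite -(glue_central _ _ (central_spine ir (iso_lobe _ ir1))).
  - exact: hK (spine_reduced ir).
  - exact: exists_level2 treeGi centralGi diamGi.
  - exact: exists_level2 treeGi1 centralGi1 diamGi1.
have ei := last_lobe ir (negbT ir1); subst i.
have [_ _ hK _] := iso_last.
by rewrite -(central_unique treeGi centralGi diamGi (central_spine ir iso_last)) hK ?spine_reduced.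
Qed.

Lemma embA_reduced {j} a : j < r -> embA j a \in reduced_lobe j.
Proof.
move=> jr; rewrite /embA; case: ifP => jr1; first by case: (iso_lobe _ jr1) => gS _ _ _; exact: gS.
by have ej := last_lobe jr (negbT jr1); subst j; case: iso_last => gS _ _ _; exact: gS.
Qed.

Lemma adj_embA {j} a b : j < r -> adj (embA j a) (embA j b) = adj a b.
Proof.
move=> jr; rewrite /embA; case: ifP => jr1.
  case: (iso_lobe _ jr1) => gS gK _ hadj.
  by rewrite -(hadj (gg j _) (gg j _)) ?gS // !gK adj_glue_in_inl //; apply: irrG.
have ej := last_lobe jr (negbT jr1); subst j.
by case: iso_last => gS gK _ hadj; rewrite -(hadj (gl _ a) (gl _ b)) ?gS // !gK.
Qed.

Lemma embB_reduced {j} b : j.+1 < r -> embB j b \in reduced_lobe j.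
Proof. by move=> jr1; case: (iso_lobe _ jr1) => gS _ _ _; exact: gS. Qed.

Lemma adj_embB {j} a b : j.+1 < r -> adj (embB j a) (embB j b) = adj a b.
Proof.
move=> jr1; case: (iso_lobe _ jr1) => gS gK _ hadj.
by rewrite -(hadj (gg j _) (gg j _)) ?gS // !gK adj_glue_in_inr //; apply: irrG => //; exact: ltnW.
Qed.

Lemma embB_center {j} : j.+1 < r -> embB j (c j.+1) = s j.
Proof. by move=> jr1; rewrite /embB glue_in_center -(embA_center (ltnW jr1)) /embA jr1. Qed.

(* The second factor of a glued lobe i belongs to level i + 1. *)
Definition level x := let i := lobe x in
  if (i.+1 < r) && (x \in reduced_lobe i) then (if val (hh i x) is inr _ then i.+1 else i) else i.

Lemma level_lt x : level x < r.
Proof. by rewrite /level; case: ifP => [/andP [ir1 _]|_]; [case: (val _) | apply: lobe_lt]. Qed.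

Lemma level_pendant {j x} : x \in pendants j -> level x = j.
Proof.
move=> xp; have lx := pendants_lobe xp.
have nF : x \notin reduced_lobe j by rewrite -lx -pendantsE lx.
by rewrite /level lx (negbTE nF) andbF.
Qed.

Lemma level_embA {j} a : j < r -> level (embA j a) = j.
Proof.
move=> jr; have aF := embA_reduced a jr; rewrite /level (reduced_lobeP aF) aF andbT.
case: ifP => // jr1; case: (iso_lobe _ jr1) => _ gK _ _.
by rewrite /embA jr1 gK.
Qed.

Lemma level_embB {j} b : j.+1 < r -> b != c j.+1 -> level (embB j b) = j.+1.
Proof.
move=> jr1 bc; have bF := embB_reduced b jr1; rewrite /level (reduced_lobeP bF) bF jr1 /=.
by case: (iso_lobe _ jr1) => _ gK _ _; rewrite /embB gK /= (negbTE bc).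
Qed.

Lemma reduced_lobe_cases {i x} : i < r -> x \in reduced_lobe i ->
  (exists a, x = embA i a) \/ (exists2 b, b != c i.+1 & i.+1 < r /\ x = embB i b).
Proof.
move=> ir xF; have [ir1|ir1] := boolP (i.+1 < r); last first.
  have ei := last_lobe ir ir1; subst i.
  by left; exists (hl r.-1 x); rewrite /embA ifN //; case: iso_last => _ _ hK _; rewrite hK.
case: (iso_lobe _ ir1) => _ _ hK _.
have xE : x = gg i (glue_in (val (hh i x))) by rewrite glue_in_val hK.
case E: (val (hh i x)) xE => [a|b] xE; first by left; exists a; rewrite /embA ir1.
by right; exists b; first exact: glue_val_inr E.
Qed.

Lemma level_cases x : [\/ x \in pendants (level x), exists a, x = embA (level x) a |
  exists2 j, level x = j.+1 & exists2 b, b != c j.+1 & x = embB j b].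
Proof.
have [xp|] := boolP (x \in pendants (lobe x)); first by constructor 1; rewrite (level_pendant xp).
rewrite pendantsE negbK => xF.
case: (reduced_lobe_cases (lobe_lt x) xF) => [[a ->]|[b bc [jr1 ->]]].
  by constructor 2; rewrite level_embA //; exists a.
by constructor 3; exists (lobe x); [rewrite level_embB | exists b].
Qed.

Lemma edge_cases {x y : vtx L} : adj x y ->
  [\/ exists2 i, i.+1 < r & same_edge x y (s i) (s i.+1),
      exists j p, p \in pendants j /\ same_edge x y p (s j),
      exists j a b, j < r /\ same_edge x y (embA j a) (embA j b) |
      exists j a b, j.+1 < r /\ same_edge x y (embB j a) (embB j b)].
Proof.
move=> xy; case: (edge_lobe _ _ xy) => [exy|[i [ir E]]]; last by constructor 1; exists i.
have [xp|xF] := boolP (x \in pendants (lobe x)).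
  by constructor 2; exists (lobe x), x; split=> //; left; split=> //; apply: pendant_adj xp _ xy.
have [yp|yF] := boolP (y \in pendants (lobe y)).
  constructor 2; exists (lobe y), y; split=> //; right; split=> //.
  by apply: pendant_adj yp exy _; rewrite symL.
rewrite pendantsE negbK in xF; rewrite pendantsE negbK -exy in yF.
move: xF yF (lobe_lt x); move: (lobe x) => i xF yF ir.
have [ir1|ir1] := boolP (i.+1 < r); last first.
  have ei := last_lobe ir ir1; subst i.
  constructor 3; exists r.-1, (hl r.-1 x), (hl r.-1 y); split=> //; left.
  by rewrite /embA !ifN //; case: iso_last => _ _ hK _; rewrite !hK.
case: (iso_lobe _ ir1) => _ _ hK hadj.
have : adj (hh i x) (hh i y) by rewrite hadj.
case/glue_adj=> -[a [b [Ex Ey _]]].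
  by constructor 3; exists i, a, b; split=> //; left; rewrite /embA ir1 -Ex -Ey !hK.
by constructor 4; exists i, a, b; split=> //; left; rewrite /embB -Ex -Ey !hK.
Qed.

Lemma level_spine {i} : i < r -> level (s i) = i.
Proof. by move=> ir; rewrite -{1}(embA_center ir) level_embA. Qed.

Lemma level_embB_center {j} z : j.+1 < r ->
  level (embB j z) = if z == c j.+1 then j else j.+1.
Proof.
move=> jr1; case: eqP => [->|/eqP zc]; last exact: level_embB.
by rewrite embB_center // level_spine // ltnW.
Qed.

Lemma reduced_not_pendant {i x} : x \in reduced_lobe i -> x \notin pendants i.
Proof. by move=> xF; have lx := reduced_lobeP xF; rewrite -lx pendantsE lx xF. Qed.

Lemma f_inj {j} : j < r -> injective (f j).
Proof. by move/lobe_graph => [_ _ []]. Qed.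

Lemma f_le {j} a : j < r -> f j a <= nedges (G j).
Proof. by move/lobe_graph => [_ _ [_ []]]. Qed.

Lemma f_graceful {j} {a b a' b' : vtx (G j)} : j < r -> adj a b -> adj a' b' ->
  absdiff (f j a) (f j b) = absdiff (f j a') (f j b') -> same_edge a b a' b'.
Proof. by move/lobe_graph => [_ _ [_ [_ fgr]] _ _]; apply: fgr. Qed.

Lemma f_center_onto {j} : j < r ->
  f j (c j) = nedges (G j) /\ forall n, n <= nedges (G j) -> exists a, f j a = n.
Proof. by move/lobe_graph => [treeGj _ fgr _ cmax]; apply: graceful_tree_onto cmax. Qed.

Lemma f_lt {j} a : j < r -> a != c j -> f j a < nedges (G j).
Proof.
move=> jr ac; rewrite ltn_neqAle f_le // andbT -(f_center_onto jr).1.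
by apply: contra ac => /eqP /(f_inj jr) ->.
Qed.

Lemma adj_center_neq {j a} : j < r -> adj (c j) a -> a != c j.
Proof. by move=> jr; apply: contraTneq => ->; rewrite irrG. Qed.

Lemma f_adj_neq {j a b} : j < r -> adj a b -> f j a != f j b.
Proof. by move=> jr ab; apply: contraTneq ab => /(f_inj jr) ->; rewrite irrG. Qed.

Lemma adj_center_other {j a b} : j < r -> adj a b -> adj (c j) a -> adj (c j) b = false.
Proof.
move=> jr ab ca; move/lobe_graph: (jr) => [treeGj _ _ cGj _].
by move: (adj_center_xor treeGj cGj ab); rewrite ca; case: (adj _ b).
Qed.

Lemma oriented_edge {j} (e : vtx (G j) -> vtx L) x y a b : j < r -> adj a b ->
  same_edge x y (e a) (e b) ->
  exists a' b', [/\ adj a' b', adj (c j) a' & same_edge x y (e a') (e b')].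
Proof.
move=> jr ab E; move/lobe_graph: (jr) => [treeGj _ _ cGj _].
have := adj_center_xor treeGj cGj ab; case ca: (adj (c j) a) => /= cb; first by exists a, b.
exists b, a; split; first by rewrite symG.
  by move: cb; case: (adj _ b).
by case: E => -[-> ->]; [right | left].
Qed.

(* With every edge ab of G_j oriented so that a is a neighbour of the centre,
   the differences f b - f a are pairwise distinct even up to sign. *)
Lemma oriented_diff_inj {j a b a' b'} : j < r -> adj a b -> adj (c j) a ->
  adj a' b' -> adj (c j) a' -> f j b + f j a' = f j b' + f j a -> a = a' /\ b = b'.
Proof.
move=> jr ab ca ab' ca' E.
move/lobe_graph: (jr) => [treeGj _ _ cGj _].
case: (f_graceful jr ab ab' _) => [|//|[ea eb]]; first by rewrite /absdiff; lia.
by subst a' b'; move: (adj_center_xor treeGj cGj ab); rewrite ca ca'.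
Qed.

Lemma oriented_diff_opp {j a b a' b'} : j < r -> adj a b -> adj (c j) a ->
  adj a' b' -> adj (c j) a' -> f j b + f j b' = f j a' + f j a -> False.
Proof.
move=> jr ab ca ab' ca' E.
move/lobe_graph: (jr) => [treeGj _ _ cGj _].
case: (f_graceful jr ab ab' _) => [|[ea eb]|[ea eb]]; first by rewrite /absdiff; lia.
  by subst a' b'; move/eqP: (f_adj_neq jr ab); lia.
by subst a' b'; move: (adj_center_xor treeGj cGj ab); rewrite ca ca'.
Qed.

Definition k j := #|pendants j|.
Definition m j := nedges (G j).
Fixpoint N j := if j is j'.+1 then N j' + 2 * m j + 1 + k j else k 0 + m 0.

Definition labelG j (low : bool) (a : vtx (G j)) := (if low then k j else N j - m j) + f j a.
Definition pendant_index j x := index x (enum (pendants j)).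

Definition local_label x := let i := lobe x in
  if x \in pendants i then pendant_index i x
  else if i.+1 < r then
    (match val (hh i x) with
     | inl a => labelG i (adj (c i) a) a
     | inr b => labelG i.+1 (~~ adj (c i.+1) b) b end)
  else labelG i (adj (c i) (hl i x)) (hl i x).

Definition flip j n := k j + m j + N j.-1 - n.

Fixpoint label j x :=
  if j is j'.+1 then (if level x == j then local_label x else flip j (label j' x))
  else local_label x.

Lemma N_ge j : k j + m j <= N j.
Proof. by case: j => //= j; lia. Qed.

Lemma label_old {j x} : level x < j -> label j x = flip j (label j.-1 x).
Proof. by case: j => //= j lt_xj; rewrite ifN // neq_ltn lt_xj. Qed.

Lemma label_cur {j x} : level x = j -> label j x = local_label x.
Proof. by case: j => [|j] //= ->; rewrite eqxx. Qed.

Lemma label_pendant {j x} : x \in pendants j -> label j x = pendant_index j x.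
Proof.
by move=> xp; rewrite label_cur ?(level_pendant xp) // /local_label (pendants_lobe xp) xp.
Qed.

Lemma label_embA {j} a : j < r -> label j (embA j a) = labelG j (adj (c j) a) a.
Proof.
move=> jr; have aF := embA_reduced a jr.
rewrite label_cur ?level_embA // /local_label (reduced_lobeP aF) (negbTE (reduced_not_pendant aF)).
case: ifP => jr1; first by case: (iso_lobe _ jr1) => _ gK _ _; rewrite /embA jr1 gK.
have ej := last_lobe jr (negbT jr1); subst j.
by case: iso_last => _ gK _ _; rewrite /embA ifN ?jr1 // gK.
Qed.

Lemma label_spine {j} : j < r -> label j (s j) = N j.
Proof.
move=> jr; rewrite -(embA_center jr) label_embA // /labelG irrG // (f_center_onto jr).1.
by have := N_ge j; rewrite /m; lia.
Qed.

Lemma label_embB {j} b : j.+1 < r ->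
  label j.+1 (embB j b) = labelG j.+1 (~~ adj (c j.+1) b) b.
Proof.
move=> jr1; have [->|bc] := eqVneq b (c j.+1).
  have jr := ltnW jr1.
  rewrite /labelG irrG // (f_center_onto jr1).1 embB_center // label_old ?level_spine //.
  by rewrite label_spine // /flip /m [~~ false]/=; lia.
have bF := embB_reduced b jr1.
rewrite label_cur ?level_embB // /local_label (reduced_lobeP bF) (negbTE (reduced_not_pendant bF)) jr1.
by case: (iso_lobe _ jr1) => _ gK _ _; rewrite /embB gK /= (negbTE bc).
Qed.

Lemma pendant_index_lt {j x} : x \in pendants j -> pendant_index j x < k j.
Proof. by move=> xp; rewrite /k /pendant_index cardE index_mem mem_enum. Qed.

Lemma pendant_index_inj {j} : {in pendants j &, injective (pendant_index j)}.
Proof. by move=> x y xp yp; apply: (@index_inj _ x (enum (pendants j))); rewrite mem_enum. Qed.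

Lemma pendant_index_onto {j n} : n < k j -> exists2 x, x \in pendants j & pendant_index j x = n.
Proof.
move=> nk; have nk' : n < size (enum (pendants j)) by rewrite -cardE.
exists (nth (s j) (enum (pendants j)) n); first by rewrite -mem_enum mem_nth.
by rewrite /pendant_index index_uniq // enum_uniq.
Qed.

Lemma edge_level_cases {j x y} : j < r -> adj x y -> level x <= j -> level y <= j ->
  (level x < j /\ level y < j) \/
  [\/ exists2 p, p \in pendants j & same_edge x y p (s j),
      exists2 i, j = i.+1 & same_edge x y (s i) (s j),
      exists a b, [/\ adj a b, adj (c j) a & same_edge x y (embA j a) (embA j b)] |
      exists2 i, j = i.+1 & exists a b,
        [/\ adj a b, adj (c i.+1) a & same_edge x y (embB i a) (embB i b)]].
Proof.
move=> jr xy lx ly.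
have both_lt u v : same_edge x y u v -> level u < j -> level v < j ->
    level x < j /\ level y < j by case=> -[-> ->].
case: (edge_cases xy) => [[i ir1 E]|[j' [p [pp E]]]|[j' [a [b [jr' E]]]]|[j' [a [b [jr1' E]]]]].
- have [li li1] := (level_spine (ltnW ir1), level_spine ir1).
  case: (ltnP i.+1 j) => ij; first by left; apply: both_lt E _ _; lia.
  have ej : j = i.+1 by case: E => -[ex ey]; move: lx ly; rewrite ex ey li li1; lia.
  by right; constructor 2; exists i; rewrite // ej.
- have jr' : j' < r by rewrite -(level_pendant pp) level_lt.
  have [lp ls] := (level_pendant pp, level_spine jr').
  case: (ltnP j' j) => ij; first by left; apply: both_lt E _ _; rewrite ?lp ?ls.
  have ej : j' = j by case: E => -[ex ey]; move: lx ly; rewrite ex ey lp ls; lia.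
  by right; constructor 1; exists p; rewrite -ej.
- have [la lb] := (level_embA a jr', level_embA b jr').
  case: (ltnP j' j) => ij; first by left; apply: both_lt E _ _; rewrite ?la ?lb.
  have ej : j' = j by case: E => -[ex ey]; move: lx ly; rewrite ex ey la lb; lia.
  subst j'; have ab : adj a b.
    by case: E => -[ex ey]; move: xy; rewrite ex ey adj_embA // (symG jr).
  by right; constructor 3; apply: oriented_edge jr ab E.
- have lz z := level_embB_center z jr1'.
  have lz_le z : level (embB j' z) <= j'.+1 by rewrite lz; case: (_ == _).
  case: (ltnP j'.+1 j) => ij.
    by left; apply: both_lt E _ _; apply: leq_ltn_trans (lz_le _) ij.
  have [ej|nj] := eqVneq j j'.+1.
    subst j; have ab : adj a b.
      by case: E => -[ex ey]; move: xy; rewrite ex ey adj_embB // (symG jr).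
    by right; constructor 4; exists j' => //; apply: oriented_edge jr ab E.
  have cz z : level (embB j' z) <= j -> z = c j'.+1.
    by rewrite lz; case: eqP => // _; lia.
  by case: E => -[ex ey]; move: lx ly xy; rewrite ex ey => /cz -> /cz ->;
     rewrite adj_embB // irrG.
Qed.

Definition graceful_upto j :=
  [/\ forall x, level x <= j -> label j x <= N j,
      forall x y, level x <= j -> level y <= j -> label j x = label j y -> x = y,
      forall x y x' y', level x <= j -> level y <= j -> level x' <= j -> level y' <= j ->
        adj x y -> adj x' y' ->
        absdiff (label j x) (label j y) = absdiff (label j x') (label j y') ->
        same_edge x y x' y'
    & forall n, n <= N j -> exists2 x, level x <= j & label j x = n].

Lemma level0_cases x : level x <= 0 -> x \in pendants 0 \/ exists a, x = embA 0 a.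
Proof.
rewrite leqn0 => /eqP l0; move: (level_cases x); rewrite l0.
by case=> [xp|[a xa]|[i]] //; [left | right; exists a].
Qed.

Lemma label0_embA a : label 0 (embA 0 a) = k 0 + f 0 a.
Proof. by rewrite label_embA // /labelG /=; case: ifP; lia. Qed.

Lemma level0_edge {u v} : adj u v -> level u <= 0 -> level v <= 0 ->
  (exists2 p, p \in pendants 0 &
     same_edge u v p (s 0) /\ absdiff (label 0 u) (label 0 v) + pendant_index 0 p = N 0) \/
  (exists a b, [/\ adj a b, same_edge u v (embA 0 a) (embA 0 b) &
     absdiff (label 0 u) (label 0 v) = absdiff (f 0 a) (f 0 b)]).
Proof.
move=> uv lu lv.
case: (edge_level_cases r_gt0 uv lu lv) => [[]//|[[p pp E]|[]//|[a [b [ab _ E]]]|[]//]].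
  left; exists p => //; split=> //.
  have := pendant_index_lt pp; have := N_ge 0.
  by case: E => -[-> ->]; rewrite label_spine // label_pendant // /absdiff; lia.
right; exists a, b; split=> //.
by case: E => -[-> ->]; rewrite !label0_embA /absdiff; lia.
Qed.

Lemma graceful_upto0 : graceful_upto 0.
Proof.
have f0_le a : f 0 a <= m 0 := f_le a r_gt0.
split.
- move=> x /level0_cases [xp|[a ->]]; last by rewrite label0_embA /= leq_add2l f0_le.
  by rewrite label_pendant //= ltnW // ltn_addr // pendant_index_lt.
- move=> x y /level0_cases [xp|[a ->]] /level0_cases [yp|[b ->]].
  + by rewrite !label_pendant //; apply: pendant_index_inj.
  + by rewrite label0_embA label_pendant //; have := pendant_index_lt xp; lia.
  + by rewrite label0_embA label_pendant //; have := pendant_index_lt yp; lia.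
  + by rewrite !label0_embA => /addnI /(f_inj r_gt0) ->.
- move=> x y x' y' lx ly lx' ly' xy xy' d_eq.
  have N0E : N 0 = k 0 + m 0 by [].
  have fdiff a b : absdiff (f 0 a) (f 0 b) <= m 0.
    by have := f0_le a; have := f0_le b; rewrite /absdiff; lia.
  case: (level0_edge xy lx ly) => [[p pp [E dE]]|[a [b [ab E dE]]]].
    case: (level0_edge xy' lx' ly') => [[p' pp' [E' dE']]|[a' [b' [ab' E' dE']]]].
      have pE : p = p' by apply: pendant_index_inj => //; lia.
      by subst p'; apply: same_edge_trans E E'.
    by have := pendant_index_lt pp; have := fdiff a' b'; lia.
  case: (level0_edge xy' lx' ly') => [[p' pp' [E' dE']]|[a' [b' [ab' E' dE']]]].
    by have := pendant_index_lt pp'; have := fdiff a b; lia.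
  have := f_graceful r_gt0 ab ab' (etrans (esym dE) (etrans d_eq dE')).
  case=> -[ea eb]; subst a' b'; first exact: same_edge_trans E E'.
  exact: same_edge_trans E (same_edge_swap E').
- move=> n nN; case: (ltnP n (k 0)) => nk.
    by have [x xp <-] := pendant_index_onto nk; exists x; rewrite ?label_pendant ?(level_pendant xp).
  have [a fa] : exists a, f 0 a = n - k 0.
    by apply: (f_center_onto r_gt0).2; move: nN; rewrite [N 0]/= /m; lia.
  by exists (embA 0 a); rewrite ?level_embA ?label0_embA ?fa //; lia.
Qed.

Lemma N_succ i : N i.+1 = N i + 2 * m i.+1 + 1 + k i.+1.
Proof. by []. Qed.

Section Step.
Variable j : nat.
Hypotheses (jr1 : j.+1 < r) (IH : graceful_upto j).

Let jr : j < r. Proof. exact: ltnW. Qed.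
Let fM a : f j.+1 a <= m j.+1. Proof. exact: f_le. Qed.
Let fM_lt a : a != c j.+1 -> f j.+1 a < m j.+1. Proof. exact: f_lt. Qed.
Let label_old_le x : level x <= j -> label j x <= N j. Proof. by case: IH => le _ _ _; apply: le. Qed.

Lemma step_label_old x : level x <= j -> label j.+1 x = k j.+1 + m j.+1 + N j - label j x.
Proof. by move=> lx; rewrite label_old. Qed.

Lemma step_labelG_bounds {low : bool} {a} : low ==> (a != c j.+1) ->
  if low then k j.+1 <= labelG j.+1 low a < k j.+1 + m j.+1
  else k j.+1 + m j.+1 + N j < labelG j.+1 low a <= N j.+1.
Proof.
rewrite /labelG N_succ; case: low => [/= /fM_lt|_]; last have := fM a; lia.
Qed.

Lemma step_labelG_inj {low low' : bool} {a a'} :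
  low ==> (a != c j.+1) -> low' ==> (a' != c j.+1) ->
  labelG j.+1 low a = labelG j.+1 low' a' -> low = low' /\ a = a'.
Proof.
move=> ha ha' E; have bd := step_labelG_bounds ha; have bd' := step_labelG_bounds ha'.
have low_eq : low = low' by move: E bd bd'; clear ha ha'; case: low; case: low'; lia.
by subst low'; split=> //; apply: (f_inj jr1); move: E; rewrite /labelG; lia.
Qed.

Definition step_emb (low : bool) (a : vtx (G j.+1)) :=
  if low == adj (c j.+1) a then embA j.+1 a else embB j a.

Lemma step_vertex_label x : level x <= j.+1 ->
  [\/ level x <= j /\ label j.+1 x = k j.+1 + m j.+1 + N j - label j x,
      x \in pendants j.+1 /\ label j.+1 x = pendant_index j.+1 x |
      exists (low : bool) a, [/\ low ==> (a != c j.+1), x = step_emb low a &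
                                label j.+1 x = labelG j.+1 low a]].
Proof.
rewrite leq_eqVlt ltnS => /orP [/eqP lx|lx]; last by constructor 1; rewrite label_old.
move: (level_cases x); rewrite lx => -[xp|[a ->]|[i /succn_inj ei [b bc ->]]].
- by constructor 2; rewrite label_pendant.
- constructor 3; exists (adj (c j.+1) a), a; rewrite label_embA // /step_emb eqxx.
  by split=> //; apply/implyP => /(adj_center_neq jr1).
- subst i; constructor 3; exists (~~ adj (c j.+1) b), b; rewrite label_embB //.
  by rewrite bc implybT /step_emb; case: (adj _ b).
Qed.

Lemma step_label_le x : level x <= j.+1 -> label j.+1 x <= N j.+1.
Proof.
case/step_vertex_label => [[_ ->]|[xp ->]|[low [a [ha _ ->]]]].
- by rewrite N_succ; lia.
- by have := pendant_index_lt xp; rewrite N_succ; lia.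
- by have := step_labelG_bounds ha; case: low {ha}; rewrite N_succ; lia.
Qed.

Lemma step_label_inj x y : level x <= j.+1 -> level y <= j.+1 ->
  label j.+1 x = label j.+1 y -> x = y.
Proof.
have [_ IHinj _ _] := IH.
move=> /step_vertex_label [[lx ->]|[xp ->]|[l [a [ha -> ->]]]].
all: move=> /step_vertex_label [[ly ->]|[yp ->]|[l' [a' [ha' -> ->]]]].
all: try have := label_old_le _ lx; try have := label_old_le _ ly.
all: try have := pendant_index_lt xp; try have := pendant_index_lt yp.
all: try have := step_labelG_bounds ha; try have := step_labelG_bounds ha'.
- by move=> ley lex E; apply: IHinj => //; lia.
- by lia.
- by case: l' {ha'}; lia.
- by lia.
- by move=> _ _; apply: pendant_index_inj.
- by case: l' {ha'}; lia.
- by case: l {ha}; lia.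
- by case: l {ha}; lia.
- by move=> _ _ /(step_labelG_inj ha ha') [-> ->].
Qed.

Lemma step_edge {x y} : adj x y -> level x <= j.+1 -> level y <= j.+1 ->
  let d := absdiff (label j.+1 x) (label j.+1 y) in
  [/\ level x <= j, level y <= j & d = absdiff (label j x) (label j y)] \/
  [\/ exists2 p, p \in pendants j.+1 & same_edge x y p (s j.+1) /\
                                       d + pendant_index j.+1 p = N j.+1,
      same_edge x y (s j) (s j.+1) /\ d = N j + m j.+1 + 1,
      exists a b, [/\ adj a b, adj (c j.+1) a, same_edge x y (embA j.+1 a) (embA j.+1 b)
                    & d + f j.+1 a = N j + m j.+1 + 1 + f j.+1 b] |
      exists a b, [/\ adj a b, adj (c j.+1) a, same_edge x y (embB j a) (embB j b)
                    & d + f j.+1 b = N j + m j.+1 + 1 + f j.+1 a]].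
Proof.
move=> xy lx ly d; rewrite {}/d.
have fa_lt a : adj (c j.+1) a -> f j.+1 a < m j.+1 by move/(adj_center_neq jr1)/fM_lt.
case: (edge_level_cases jr1 xy lx ly) =>
  [[lx' ly']|[[p pp E]|[i /succn_inj ei E]|[a [b [ab ca E]]]|[i /succn_inj ei [a [b [ab ca E]]]]]].
- rewrite !ltnS in lx' ly'; left; split=> //.
  rewrite !step_label_old //; have := label_old_le _ lx'; have := label_old_le _ ly'.
  by rewrite /absdiff; lia.
- right; constructor 1; exists p => //; split=> //.
  have := pendant_index_lt pp; have := N_ge j.+1.
  by case: E => -[-> ->]; rewrite label_spine // label_pendant // /absdiff; lia.
- subst i; right; constructor 2; split=> //.
  have ls := step_label_old (s j) (eq_leq (level_spine jr)).
  have := label_old_le _ (eq_leq (level_spine jr)).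
  by case: E => -[-> ->]; rewrite ls (label_spine jr) (label_spine jr1) N_succ /absdiff; lia.
- right; constructor 3; exists a, b; split=> //.
  have cb := adj_center_other jr1 ab ca; have := fa_lt a ca; have := fM b.
  by case: E => -[-> ->]; rewrite !label_embA // /labelG ca cb N_succ /absdiff; lia.
- subst i; right; constructor 4; exists a, b; split=> //.
  have cb := adj_center_other jr1 ab ca; have := fa_lt a ca; have := fM b.
  by case: E => -[-> ->]; rewrite !label_embB // /labelG ca cb /= /absdiff; lia.
Qed.

Lemma step_edge_inj x y x' y' :
  level x <= j.+1 -> level y <= j.+1 -> level x' <= j.+1 -> level y' <= j.+1 ->
  adj x y -> adj x' y' ->
  absdiff (label j.+1 x) (label j.+1 y) = absdiff (label j.+1 x') (label j.+1 y') ->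
  same_edge x y x' y'.
Proof.
have [_ _ IHedge _] := IH.
have fa_lt a : adj (c j.+1) a -> f j.+1 a < m j.+1 by move/(adj_center_neq jr1)/fM_lt.
have old_le u v : level u <= j -> level v <= j -> absdiff (label j u) (label j v) <= N j.
  by move=> lu lv; have := label_old_le _ lu; have := label_old_le _ lv; rewrite /absdiff; lia.
have NS := N_succ j.
move=> lx ly lx' ly' xy xy' d_eq.
case: (step_edge xy lx ly) =>
  [[lx0 ly0 dE]|[[p pp [E dE]]|[E dE]|[a [b [ab ca E dE]]]|[a [b [ab ca E dE]]]]].
all: case: (step_edge xy' lx' ly') =>
  [[lx0' ly0' dE']|[[p' pp' [E' dE']]|[E' dE']|[a' [b' [ab' ca' E' dE']]]|[a' [b' [ab' ca' E' dE']]]]].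
all: try have := old_le _ _ lx0 ly0; try have := old_le _ _ lx0' ly0'.
all: try have := pendant_index_lt pp; try have := pendant_index_lt pp'.
all: try have := fa_lt _ ca; try have := fM b; try have := fa_lt _ ca'; try have := fM b'.
(* Old edges, new edges of G_j and the spine, and pendant edges have their labels in
   the disjoint ranges [1, N j], [N j + 1, N j + 2 m + 1] and above. *)
all: move=> *; try lia.
- by apply: IHedge => //; lia.
- have pE : p = p' by apply: pendant_index_inj => //; lia.
  by subst p'; exact: same_edge_trans E E'.
- exact: same_edge_trans E E'.
- by move/eqP: (f_adj_neq jr1 ab'); lia.
- by move/eqP: (f_adj_neq jr1 ab'); lia.
- by move/eqP: (f_adj_neq jr1 ab); lia.
- have [ea eb] := oriented_diff_inj jr1 ab ca ab' ca' (ltac:(lia)).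
  by subst a' b'; exact: same_edge_trans E E'.
- by case: (oriented_diff_opp jr1 ab ca ab' ca'); lia.
- by move/eqP: (f_adj_neq jr1 ab); lia.
- by case: (oriented_diff_opp jr1 ab ca ab' ca'); lia.
- have [ea eb] := oriented_diff_inj jr1 ab ca ab' ca' (ltac:(lia)).
  by subst a' b'; exact: same_edge_trans E E'.
Qed.

Lemma step_emb_label {low : bool} {a} : low ==> (a != c j.+1) ->
  level (step_emb low a) = j.+1 /\ label j.+1 (step_emb low a) = labelG j.+1 low a.
Proof.
move=> ha; rewrite /step_emb; case: eqP => [->|/eqP ne]; first by rewrite level_embA ?label_embA.
have ac : a != c j.+1.
  case: low ha ne => [//|_]; rewrite eq_sym eqbF_neg negbK.
  exact: adj_center_neq jr1.
have -> : low = ~~ adj (c j.+1) a by case: low ne {ha}; case: (adj _ a).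
by rewrite level_embB ?label_embB.
Qed.

Lemma step_label_onto n : n <= N j.+1 -> exists2 x, level x <= j.+1 & label j.+1 x = n.
Proof.
have [_ _ _ IHonto] := IH; have [fc fonto] := f_center_onto jr1.
move=> nN; rewrite N_succ in nN.
have by_labelG (low : bool) a : low ==> (a != c j.+1) -> labelG j.+1 low a = n ->
    exists2 x, level x <= j.+1 & label j.+1 x = n.
  by move=> ha <-; have [lv lb] := step_emb_label ha; exists (step_emb low a); rewrite ?lv.
case: (ltnP n (k j.+1)) => [nk|kn].
  by have [x xp <-] := pendant_index_onto nk; exists x; rewrite ?(level_pendant xp) ?label_pendant.
case: (ltnP n (k j.+1 + m j.+1)) => [nkm|kmn].
  have [a fa] := fonto (n - k j.+1) (ltac:(rewrite /m in nkm; lia)).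
  have ac : a != c j.+1 by apply/eqP => ac; move: fa; rewrite ac fc /m in nkm *; lia.
  by apply: (by_labelG true a ac); rewrite /labelG fa; lia.
case: (leqP n (k j.+1 + m j.+1 + N j)) => [nold|nhigh].
  have [x lx lxE] := IHonto (k j.+1 + m j.+1 + N j - n) (ltac:(lia)).
  by exists x; [exact: leqW | rewrite step_label_old // lxE; lia].
have [a fa] := fonto (n - (N j.+1 - m j.+1)) (ltac:(rewrite N_succ /m in nN *; lia)).
by apply: (by_labelG false a isT); rewrite /labelG fa N_succ; lia.
Qed.

Lemma graceful_upto_step : graceful_upto j.+1.
Proof.
split; [exact: step_label_le | exact: step_label_inj | exact: step_edge_inj |].
exact: step_label_onto.
Qed.
End Step.

Lemma graceful_upto_all {j} : j < r -> graceful_upto j.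
Proof.
elim: j => [|j IHj] jr; first exact: graceful_upto0.
exact: graceful_upto_step _ jr (IHj (ltnW jr)).
Qed.

Lemma lobster_graceful : graceful L.
Proof.
have jr : r.-1 < r by rewrite prednK.
have lv x : level x <= r.-1 by rewrite -ltnS prednK ?level_lt.
have [le inj edge onto] := graceful_upto_all jr.
have label_inj : injective (label r.-1) by move=> x y; apply: inj.
have cardL : #|vtx L| = (N r.-1).+1.
  by apply: card_onto_iota label_inj _ _ => [x | i /onto [x _ <-]]; [exact: le | exists x].
have [_ [_ [_ EL]]] := treeL; exists (label r.-1); split=> //; split.
  by move=> x; rewrite EL cardL subn1 /= le.
by move=> x y x' y' xy xy'; apply: edge.
Qed.

End LobsterDecomposition.

Theorem theorem4p5 (L : graph) :
  lobster L -> pairwise_linked L -> graceful L.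
Proof.
move=> [treeL _] [r [s [lobe [G [f [c [r_gt0 [_ [_ [lobe_lt [lobe_spine
  [edge_lobe [lobe_shape [lobe_graph [iso_lobe iso_last]]]]]]]]]]]]]]].
have [hh [gg iso_hh]] := @induced_iso_family L (fun i => i.+1 < r) (reduced_lobe L s lobe)
  (fun i => glue (G i) (G i.+1) (c i) (c i.+1)) (s 0) (fun i => glue_in (inl (c i))) iso_lobe.
have iso_last_at i : i == r.-1 -> isomorphic (induced L (reduced_lobe L s lobe i)) (G i).
  by move/eqP ->.
have [hl [gl iso_hl]] := @induced_iso_family L (fun i => i == r.-1) (reduced_lobe L s lobe)
  G (s 0) c iso_last_at.
exact: lobster_graceful treeL r_gt0 lobe_lt lobe_spine edge_lobe lobe_shape lobe_graph
  hh gg iso_hh hl gl (iso_hl _ (eqxx _)).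
Qed.
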